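(* Every critical model (of degree $2$, $3$ or $4$) is insoluble over $K$, i.e. the curve it defines has no $K$-rational point.
   Context: $K$ is a field with normalised discrete valuation $v$, valuation ring $\mathcal{O}_K$, uniformiser $\pi$, perfect residue field $k$. Critical models: (a) A generalised binary quartic $y^2+(lx^2+mxz+nz^2)y=ax^4+bx^3z+cx^2z^2+dxz^3+ez^4$ with coefficients in $\mathcal{O}_K$ is critical if $v(l)\ge1$, $v(m)\ge1$, $v(n)\ge2$, $v(a)=1$, $v(b)\ge2$, $v(c)\ge2$, $v(d)\ge3$, $v(e)=3$; its curve lies in the weighted projective plane $\mathbb{P}(1,1,2)$ with coordinates $x,z,y$. (b) A ternary cubic $F\in\mathcal{O}_K[x,y,z]$ is critical if its coefficients satisfy: $v(x^3)=0$, $v(x^2y)\ge1$, $v(xy^2)\ge1$, $v(y^3)=1$, $v(x^2z)\ge1$, $v(xyz)\ge1$, $v(y^2z)\ge2$, $v(xz^2)\ge2$, $v(yz^2)\ge2$, $v(z^3)=2$ (where $v(\text{monomial})$ denotes the valuation of its coefficient); its curve is $\{F=0\}\subset\mathbb{P}^2$. (c) A pair $(Q_1,Q_2)$ of quadratic forms in $x_1,\dots,x_4$ over $\mathcal{O}_K$ is critical if the reductions of $Q_1,Q_2$ mod $\pi$ are quadratic forms in $x_1,x_2$ only with no common root in $\mathbb{P}^1(\overline{k})$, and, putting $R_i(x_1,\dots,x_4)=\pi^{-1}Q_i(\pi x_1,\pi x_2,x_3,x_4)$, the reductions of $R_1,R_2$ mod $\pi$ are quadratic forms in $x_3,x_4$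 only with no common root in $\mathbb{P}^1(\overline{k})$; its curve is $\{Q_1=Q_2=0\}\subset\mathbb{P}^3$. *)

From HB Require Import structures.
From mathcomp Require Import all_boot all_order all_algebra.
Set Implicit Arguments. Unset Strict Implicit. Unset Printing Implicit Defensive.
Import Order.TTheory GRing.Theory Num.Theory.
Local Open Scope ring_scope.

(* A discrete valuation on K is a map v : K -> int, only meaningful on
   nonzero elements (v 0 = +oo by convention, encoded by the predicates below). *)
Section Val.
Variable K : fieldType.
Variable v : K -> int.

(* v is a normalised discrete valuation: multiplicative, ultrametric,
   and takes the value 1 (hence its value group is exactly Z). *)
Definition is_normalised_discrete_valuation : Prop :=
  [/\ forall x y : K, x != 0 -> y != 0 -> v (x * y) = v x + v y,
      forall x y : K, x != 0 -> y != 0 -> x + y != 0 ->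
        Num.min (v x) (v y) <= v (x + y)
    & exists x : K, x != 0 /\ v x = 1].

Definition vge (x : K) (n : int) : Prop := x = 0 \/ n <= v x.
Definition veq (x : K) (n : int) : Prop := x != 0 /\ v x = n.
Definition integral (x : K) : Prop := vge x 0.

(* Perfect residue field: if the residue characteristic is a prime p
   (i.e. p lies in the maximal ideal), Frobenius is surjective on k. *)
Definition perfect_residue_field : Prop :=
  forall p : nat, prime p -> vge (p%:R) 1 ->
    forall x, integral x -> exists y, integral y /\ vge (y ^+ p - x) 1.

(* r : K -> L induces, on O_K, a ring morphism O_K -> L with kernel the
   maximal ideal, i.e. an embedding of the residue field k into L. *)
Definition residue_map (L : fieldType) (r : K -> L) : Prop :=
  [/\ (forall x y, integral x -> integral y -> r (x + y) = r x + r y),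
      (forall x y, integral x -> integral y -> r (x * y) = r x * r y),
      r 1 = 1
    & (forall x, integral x -> (r x = 0 <-> vge x 1))].

(* The reductions mod pi of the binary quadratic forms
   a1 s^2 + b1 s t + c1 t^2 and a2 s^2 + b2 s t + c2 t^2 (integral coefficients)
   have no common root in P^1(kbar): for every algebraically closed field L
   containing k, there is no common zero (s:t) in P^1(L). *)
Definition no_common_root (a1 b1 c1 a2 b2 c2 : K) : Prop :=
  forall (L : closedFieldType) (r : K -> L), residue_map r ->
    forall s t : L, (s, t) != (0, 0) ->
      ~ (r a1 * s ^+ 2 + r b1 * s * t + r c1 * t ^+ 2 = 0 /\
         r a2 * s ^+ 2 + r b2 * s * t + r c2 * t ^+ 2 = 0).

Definition critical_quartic (l m n a b c d e : K) : Prop :=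
  [/\ vge l 1, vge m 1 & vge n 2] /\
  [/\ veq a 1, vge b 2, vge c 2, vge d 3 & veq e 3].

(* K-rational point of the quartic model in P(1,1,2) (coordinates x,z,y) *)
Definition quartic_has_point (l m n a b c d e : K) : Prop :=
  exists x z y : K, (x, z, y) != (0, 0, 0) /\
    y ^+ 2 + (l * x ^+ 2 + m * x * z + n * z ^+ 2) * y =
    a * x ^+ 4 + b * x ^+ 3 * z + c * x ^+ 2 * z ^+ 2 + d * x * z ^+ 3 + e * z ^+ 4.

Definition cubic_eval (c300 c210 c120 c030 c201 c111 c021 c102 c012 c003 : K)
  (x y z : K) : K :=
  c300 * x ^+ 3 + c210 * x ^+ 2 * y + c120 * x * y ^+ 2 + c030 * y ^+ 3
  + c201 * x ^+ 2 * z + c111 * x * y * z + c021 * y ^+ 2 * z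
  + c102 * x * z ^+ 2 + c012 * y * z ^+ 2 + c003 * z ^+ 3.

Definition critical_cubic (c300 c210 c120 c030 c201 c111 c021 c102 c012 c003 : K)
  : Prop :=
  [/\ veq c300 0, vge c210 1, vge c120 1 & veq c030 1] /\
  [/\ vge c201 1, vge c111 1 & vge c021 2] /\
  [/\ vge c102 2, vge c012 2 & veq c003 2].

Definition cubic_has_point (c300 c210 c120 c030 c201 c111 c021 c102 c012 c003 : K)
  : Prop :=
  exists x y z : K, (x, y, z) != (0, 0, 0) /\
    cubic_eval c300 c210 c120 c030 c201 c111 c021 c102 c012 c003 x y z = 0.

(* (c) quadratic forms in x_1..x_4 (indices 0..3 : 'I_4), given by the
   coefficient c i j of the monomial x_i x_j for i <= j (entries with i > j
   are ignored). *)
Definition qform (c : 'I_4 -> 'I_4 -> K) (x : 'I_4 -> K) : K :=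
  \sum_(i < 4) \sum_(j < 4 | (i <= j)%N) c i j * x i * x j.

(* Coefficients of R(x) = pi^-1 Q(pi x_1, pi x_2, x_3, x_4). *)
Definition Rcoef (pi : K) (c : 'I_4 -> 'I_4 -> K) (i j : 'I_4) : K :=
  if (j < 2)%N then pi * c i j
  else if (i < 2)%N then c i j
  else c i j / pi.

(* reduction mod pi of the form with coefficients c is a quadratic form in
   x_1, x_2 only: all coefficients integral, those of monomials involving
   x_3 or x_4 in the maximal ideal *)
Definition reduces_in_x12 (c : 'I_4 -> 'I_4 -> K) : Prop :=
  forall i j : 'I_4, (i <= j)%N ->
    integral (c i j) /\ ((2 <= j)%N -> vge (c i j) 1).

(* reduction mod pi is a quadratic form in x_3, x_4 only *)
Definition reduces_in_x34 (c : 'I_4 -> 'I_4 -> K) : Prop :=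
  forall i j : 'I_4, (i <= j)%N ->
    integral (c i j) /\ ((i < 2)%N -> vge (c i j) 1).

Definition i0 : 'I_4 := @Ordinal 4 0 isT.
Definition i1 : 'I_4 := @Ordinal 4 1 isT.
Definition i2 : 'I_4 := @Ordinal 4 2 isT.
Definition i3 : 'I_4 := @Ordinal 4 3 isT.

Definition critical_pair (pi : K) (c1 c2 : 'I_4 -> 'I_4 -> K) : Prop :=
  [/\ reduces_in_x12 c1, reduces_in_x12 c2
    & no_common_root (c1 i0 i0) (c1 i0 i1) (c1 i1 i1)
                     (c2 i0 i0) (c2 i0 i1) (c2 i1 i1)] /\
  [/\ reduces_in_x34 (Rcoef pi c1), reduces_in_x34 (Rcoef pi c2)
    & no_common_root (Rcoef pi c1 i2 i2) (Rcoef pi c1 i2 i3) (Rcoef pi c1 i3 i3)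
                     (Rcoef pi c2 i2 i2) (Rcoef pi c2 i2 i3) (Rcoef pi c2 i3 i3)].

Definition pair_has_point (c1 c2 : 'I_4 -> 'I_4 -> K) : Prop :=
  exists x : 'I_4 -> K, (exists i, x i != 0) /\ qform c1 x = 0 /\ qform c2 x = 0.

End Val.

From HB Require Import structures.
From mathcomp Require Import all_boot all_order all_algebra all_field.
From mathcomp Require Import boolp classical_sets filter.
From mathcomp Require Import zify ring.
Set Implicit Arguments. Unset Strict Implicit. Unset Printing Implicit Defensive.
Import Order.TTheory GRing.Theory Num.Theory.
Local Open Scope ring_scope.

(* A point of a critical model can be scaled so that its coordinates are
   integral and one of them is a unit.  For the cubic, the equation then has a
   single term of least valuation.  For the quartic, the right-hand side gets
   odd valuation 1 or 3, while [y^2 + Q y] has even valuation or a larger one.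
   For a pair of quadrics, if [x1], [x2] are not both divisible by [pi], their
   reductions give a common root of the reductions of [Q1], [Q2]; otherwise
   [(x1/pi, x2/pi, x3, x4)] reduces to a common root of those of [R1], [R2].
   These roots live in an algebraic closure of the residue field, built as an
   ultraproduct of algebraic closures of its finitely generated subfields. *)

Section GeneratedSubfield.
Variable F : fieldType.

(* Field terms over the generators [s]: leaves are generators, [Node 0] is 1,
   [Node 1] a difference and any other node a quotient. *)
Fixpoint term_eval (s : seq F) (t : GenTree.tree nat) : F :=
  match t with
  | GenTree.Leaf n => s`_n
  | GenTree.Node 0 _ => 1
  | GenTree.Node 1 (a :: b :: _) => term_eval s a - term_eval s b
  | GenTree.Node _ (a :: b :: _) => term_eval s a / term_eval s b
  | GenTree.Node _ _ => 0
  end.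

Definition subfield_gen (s : seq F) : {pred F} :=
  fun x => `[< exists t, term_eval s t = x >].

Lemma subfield_gen_divring_closed s : divring_closed (subfield_gen s).
Proof.
split; first by apply/asboolP; exists (GenTree.Node 0 [::]).
- move=> _ _ /asboolP[a <-] /asboolP[b <-]; apply/asboolP.
  by exists (GenTree.Node 1 [:: a; b]).
- move=> _ _ /asboolP[a <-] /asboolP[b <-]; apply/asboolP.
  by exists (GenTree.Node 2 [:: a; b]).
Qed.

HB.instance Definition _ s :=
  GRing.isDivringClosed.Build F (subfield_gen s) (subfield_gen_divring_closed s).

Lemma mem_subfield_gen s x : x \in s -> x \in subfield_gen s.
Proof.
by move=> xs; apply/asboolP; exists (GenTree.Leaf (index x s)); rewrite /= nth_index.
Qed.

Record gen_field (s : seq F) :=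
  GenField { gen_val : F; gen_valP : gen_val \in subfield_gen s }.

Section GenFieldInstances.
Variable s : seq F.

HB.instance Definition _ := [isSub for @gen_val s].
HB.instance Definition _ := [Choice of gen_field s by <:].

Lemma gen_field_term (x : gen_field s) : exists t, term_eval s t == gen_val x.
Proof. by have /asboolP[t <-] := gen_valP x; exists t. Qed.

Definition gen_field_code (x : gen_field s) := xchoose (gen_field_term x).
Definition gen_field_decode t : option (gen_field s) := insub (term_eval s t).

Lemma gen_field_codeK : pcancel gen_field_code gen_field_decode.
Proof.
by move=> x; rewrite /gen_field_decode (eqP (xchooseP (gen_field_term x))) valK.
Qed.

HB.instance Definition _ := PCanIsCountable gen_field_codeK.
HB.instance Definition _ := [SubChoice_isSubIntegralDomain of gen_field s by <:].
HB.instance Definition _ := [SubIntegralDomain_isSubField of gen_field s by <:].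
End GenFieldInstances.

Definition gen_closure (s : seq F) : countClosedFieldType :=
  projT1 (countable_algebraic_closure (gen_field s : countFieldType)).

Definition gen_closure_embedding (s : seq F) : {rmorphism gen_field s -> gen_closure s} :=
  sval (projT2 (countable_algebraic_closure (gen_field s : countFieldType))).

Definition gen_embed (s : seq F) (x : F) : gen_closure s :=
  if insub x is Some y then gen_closure_embedding s y else 0.

Section GenEmbed.
Variable s : seq F.
Implicit Types x y : F.

Lemma gen_embedE x (hx : x \in subfield_gen s) :
  gen_embed s x = gen_closure_embedding s (Sub x hx).
Proof. by rewrite /gen_embed insubT. Qed.

Lemma gen_embedD x y : x \in subfield_gen s -> y \in subfield_gen s ->
  gen_embed s (x + y) = gen_embed s x + gen_embed s y.
Proof.
move=> hx hy; rewrite (gen_embedE (rpredD hx hy)) (gen_embedE hx) (gen_embedE hy).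
by rewrite -rmorphD; congr (_ _); apply: val_inj.
Qed.

Lemma gen_embedM x y : x \in subfield_gen s -> y \in subfield_gen s ->
  gen_embed s (x * y) = gen_embed s x * gen_embed s y.
Proof.
move=> hx hy; rewrite (gen_embedE (rpredM hx hy)) (gen_embedE hx) (gen_embedE hy).
by rewrite -rmorphM; congr (_ _); apply: val_inj.
Qed.

Lemma gen_embed1 : gen_embed s 1 = 1.
Proof.
rewrite (gen_embedE (rpred1 _)) -(rmorph1 (gen_closure_embedding s)).
by congr (_ _); apply: val_inj.
Qed.
End GenEmbed.
End GeneratedSubfield.

Section Ultraproduct.
Local Open Scope classical_set_scope.
Variables (I : Type) (Lf : I -> closedFieldType) (U : set_system I).
Hypothesis UU : UltraFilter U.

Record dprod := DProd { coord : forall i, Lf i }.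
HB.instance Definition _ := gen_eqMixin dprod.
HB.instance Definition _ := gen_choiceMixin dprod.

Lemma dprod_ext (f g : dprod) : (forall i, coord f i = coord g i) -> f = g.
Proof.
by case: f; case: g => g f /= fg; congr DProd; apply: functional_extensionality_dep.
Qed.

Definition dprod0 := DProd (fun i => 0).
Definition dprod1 := DProd (fun i => 1).
Definition dprod_add f g := DProd (fun i => coord f i + coord g i).
Definition dprod_opp f := DProd (fun i => - coord f i).
Definition dprod_mul f g := DProd (fun i => coord f i * coord g i).
Definition dprod_inv f := DProd (fun i => (coord f i)^-1).

Lemma dprod_addA : associative dprod_add.
Proof. by move=> f g h; apply: dprod_ext => i /=; rewrite addrA. Qed.
Lemma dprod_addC : commutative dprod_add.
Proof. by move=> f g; apply: dprod_ext => i /=; rewrite addrC. Qed.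
Lemma dprod_add0 : left_id dprod0 dprod_add.
Proof. by move=> f; apply: dprod_ext => i /=; rewrite add0r. Qed.
Lemma dprod_addN : left_inverse dprod0 dprod_opp dprod_add.
Proof. by move=> f; apply: dprod_ext => i /=; rewrite addNr. Qed.

HB.instance Definition _ :=
  GRing.isZmodule.Build dprod dprod_addA dprod_addC dprod_add0 dprod_addN.

Lemma dprod_mulA : associative dprod_mul.
Proof. by move=> f g h; apply: dprod_ext => i /=; rewrite mulrA. Qed.
Lemma dprod_mulC : commutative dprod_mul.
Proof. by move=> f g; apply: dprod_ext => i /=; rewrite mulrC. Qed.
Lemma dprod_mul1 : left_id dprod1 dprod_mul.
Proof. by move=> f; apply: dprod_ext => i /=; rewrite mul1r. Qed.
Lemma dprod_mulDl : left_distributive dprod_mul +%R.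
Proof. by move=> f g h; apply: dprod_ext => i /=; rewrite mulrDl. Qed.
Lemma dprod1_neq0 : dprod1 != 0.
Proof.
have [i _] := filter_ex (@filterT _ U _); apply/eqP => /(congr1 (coord^~ i)) /eqP.
by rewrite oner_eq0.
Qed.

HB.instance Definition _ := GRing.Zmodule_isComNzRing.Build dprod
  dprod_mulA dprod_mulC dprod_mul1 dprod_mulDl dprod1_neq0.

Definition coord_at (i : I) (f : dprod) : Lf i := coord f i.
Lemma coord_at_zmod i : zmod_morphism (coord_at i). Proof. by []. Qed.
Lemma coord_at_monoid i : monoid_morphism (coord_at i). Proof. by []. Qed.
HB.instance Definition _ i :=
  GRing.isZmodMorphism.Build dprod (Lf i) (coord_at i) (coord_at_zmod i).
HB.instance Definition _ i :=
  GRing.isMonoidMorphism.Build dprod (Lf i) (coord_at i) (coord_at_monoid i).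

Definition null_ideal : {pred dprod} := fun f => `[< U [set i | coord f i = 0] >].

Lemma null_ideal_closed : idealr_closed null_ideal.
Proof.
split; first by apply/asboolP; apply: filterS filterT.
- by apply/negP => /asboolP /filter_ex [i] /eqP; rewrite oner_eq0.
- move=> a f g /asboolP hf /asboolP hg; apply/asboolP.
  by apply: filterS (filterI hf hg) => i [/= -> ->]; rewrite mulr0 addr0.
Qed.

HB.instance Definition _ := isIdealr.Build dprod null_ideal null_ideal_closed.

Local Open Scope quotient_scope.

Definition ultraprod_ring := {ideal_quot null_ideal}.

Lemma ultraprod_eqP (f g : dprod) :
  \pi_ultraprod_ring f = \pi g <-> U [set i | coord f i = coord g i].
Proof.
split=> [/eqP|h]; last first.
  apply/eqP; rewrite -Quotient.idealrBE; apply/asboolP.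
  by apply: filterS h => i /= ->; rewrite subrr.
rewrite -Quotient.idealrBE => /asboolP; apply: filterS => i /= /eqP.
by rewrite subr_eq0 => /eqP.
Qed.

Lemma ultraprod_eq0P (f : dprod) : \pi_ultraprod_ring f = 0 <-> U [set i | coord f i = 0].
Proof. by rewrite -(rmorph0 \pi_ultraprod_ring) ultraprod_eqP. Qed.

Definition ultraprod_inv (z : ultraprod_ring) := \pi_ultraprod_ring (dprod_inv (repr z)).

Lemma ultraprod_mulVf (z : ultraprod_ring) : z != 0 -> ultraprod_inv z * z = 1.
Proof.
move=> z_neq0; have ez : z = \pi_ultraprod_ring (repr z) by rewrite reprK.
have nz : ~ U [set i | coord (repr z) i = 0].
  by move/ultraprod_eq0P; rewrite -ez; apply/eqP.
rewrite /ultraprod_inv {2}ez -rmorphM -(rmorph1 \pi_ultraprod_ring); apply/ultraprod_eqP.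
have [//|h] := in_ultra_setVsetC [set i | coord (repr z) i = 0] UU.
by apply: filterS h => i /= /eqP /mulVf.
Qed.

Lemma ultraprod_inv0 : ultraprod_inv 0 = 0.
Proof.
have /ultraprod_eq0P h0 : \pi_ultraprod_ring (repr (0 : ultraprod_ring)) = 0.
  by rewrite reprK.
by apply/ultraprod_eq0P; apply: filterS h0 => i /= ->; rewrite invr0.
Qed.

Definition ultraprod : Type := ultraprod_ring.
HB.instance Definition _ := GRing.ComNzRing.on ultraprod.
HB.instance Definition _ :=
  GRing.ComNzRing_isField.Build ultraprod ultraprod_mulVf ultraprod_inv0.

Lemma ultraprod_closed : GRing.closed_field_axiom ultraprod.
Proof.
move=> n P n_gt0; pose root_at i := solve_monicpoly (fun j => coord (repr (P j)) i) n_gt0.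
pose w := DProd (fun i => sval (cid (root_at i))).
exists (\pi_ultraprod_ring w : ultraprod).
have -> : \sum_(j < n) P j * (\pi_ultraprod_ring w : ultraprod) ^+ j
    = \pi_ultraprod_ring (\sum_(j < n) repr (P j) * w ^+ j).
  rewrite rmorph_sum; apply: eq_bigr => j _; rewrite rmorphM rmorphXn.
  by congr (_ * _); exact/esym/reprK.
rewrite -rmorphXn; congr \pi_ultraprod_ring; apply: dprod_ext => i.
rewrite -[coord _ i]/(coord_at i (w ^+ n)) -[coord (\sum_(j < n) _) i]/(coord_at i _).
rewrite rmorphXn rmorph_sum (svalP (cid (root_at i))); apply: eq_bigr => j _.
by rewrite rmorphM rmorphXn.
Qed.

HB.instance Definition _ := Field_isAlgClosed.Build ultraprod ultraprod_closed.
End Ultraproduct.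

Section ClosedFieldEmbedding.
Local Open Scope classical_set_scope.
Local Open Scope quotient_scope.
Variable F : fieldType.

Definition cofinal_seq : set_system (seq F) :=
  [set A : set (seq F) | exists s0 : seq F, forall s, {subset s0 <= s} -> A s].

Lemma cofinal_seq_proper : ProperFilter cofinal_seq.
Proof.
have FB : Filter cofinal_seq.
  split; first by exists [::].
  - move=> A1 A2 [s1 h1] [s2 h2]; exists (s1 ++ s2) => s sub; split.
      by apply: h1 => x xs; apply: sub; rewrite mem_cat xs.
    by apply: h2 => x xs; apply: sub; rewrite mem_cat xs orbT.
  - by move=> A1 A2 A12 [s0 h]; exists s0 => s /h /A12.
by apply: Build_ProperFilter_ex => A [s0 h]; exists s0; apply: h.
Qed.

(* Every finitely generated subfield of [F] embeds in an algebraically closed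
   field; an ultraproduct glues these embeddings into one for [F]. *)
Lemma exists_closed_field_embedding : exists (L : closedFieldType) (f : F -> L),
  [/\ {morph f : x y / x + y}, {morph f : x y / x * y} & f 1 = 1].
Proof.
have [U [UU cofinalU]] := ultraFilterLemma cofinal_seq_proper.
have large (s0 : seq F) : U [set s : seq F | {subset s0 <= s}] by apply: cofinalU; exists s0.
pose L := ultraprod (fun s => (gen_closure s : closedFieldType)) UU.
pose f x : L := \pi_(ultraprod_ring _ UU) (DProd (fun s => gen_embed s x)).
have gen_in x y s : {subset [:: x; y] <= s} ->
    x \in subfield_gen s /\ y \in subfield_gen s.
  by move=> sub; split; apply/mem_subfield_gen/sub; rewrite !inE eqxx ?orbT.
exists L, f; split.
- move=> x y; rewrite -rmorphD; apply/ultraprod_eqP.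
  by apply: filterS (large [:: x; y]) => s /gen_in [hx hy] /=; apply: gen_embedD.
- move=> x y; rewrite -rmorphM; apply/ultraprod_eqP.
  by apply: filterS (large [:: x; y]) => s /gen_in [hx hy] /=; apply: gen_embedM.
- rewrite -(rmorph1 \pi_(ultraprod_ring _ UU)); apply/ultraprod_eqP.
  by apply: filterS filterT => s _ /=; apply: gen_embed1.
Qed.
End ClosedFieldEmbedding.

Section ValuationArithmetic.
Variables (K : fieldType) (v : K -> int).
Hypothesis hv : is_normalised_discrete_valuation v.

Lemma valuationM (x y : K) : x != 0 -> y != 0 -> v (x * y) = v x + v y.
Proof. by case: hv => h _ _; apply: h. Qed.

Lemma valuation1 : v 1 = 0.
Proof.
have := valuationM (oner_neq0 K) (oner_neq0 K); rewrite mulr1 => h.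
by apply/esym/(@addrI _ (v 1)); rewrite addr0.
Qed.

Lemma valuationN (x : K) : v (- x) = v x.
Proof.
have n1 : (-1 : K) != 0 by rewrite oppr_eq0 oner_neq0.
have vN1 : v (-1) = 0.
  by have := valuationM n1 n1; rewrite mulrNN mulr1 valuation1; lia.
have [->|x0] := eqVneq x 0; first by rewrite oppr0.
by rewrite -mulN1r valuationM // vN1 add0r.
Qed.

Lemma valuationV (x : K) : x != 0 -> v x^-1 = - v x.
Proof.
by move=> x0; have := valuationM x0 (invr_neq0 x0); rewrite mulfV // valuation1; lia.
Qed.

Lemma vgeW (x : K) m n : m <= n -> vge v x n -> vge v x m.
Proof. by move=> mn [->|h]; [left|right; apply: le_trans h]. Qed.

Lemma veq_vge (x : K) n : veq v x n -> vge v x n.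
Proof. by case=> _ <-; right. Qed.

Lemma veq_vge_le (x : K) m n : veq v x n -> vge v x m -> m <= n.
Proof. by case=> /negPf x0 <- [/eqP|//]; rewrite x0. Qed.

Lemma vgeD (x y : K) n : vge v x n -> vge v y n -> vge v (x + y) n.
Proof.
case=> [->|hx]; first by rewrite add0r.
case=> [->|hy]; first by rewrite addr0; right.
have [xy0|xy0] := eqVneq (x + y) 0; first by left.
have [->|x0] := eqVneq x 0; first by rewrite add0r; right.
have [->|y0] := eqVneq y 0; first by rewrite addr0; right.
right; case: hv => _ h _; apply: le_trans (h _ _ x0 y0 xy0).
by rewrite le_min hx hy.
Qed.

Lemma vgeN (x : K) n : vge v x n -> vge v (- x) n.
Proof. by case=> [->|h]; [rewrite oppr0; left|right; rewrite valuationN]. Qed.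

Lemma vgeM (x y : K) m n : vge v x m -> vge v y n -> vge v (x * y) (m + n).
Proof.
case=> [->|hx]; first by rewrite mul0r; left.
case=> [->|hy]; first by rewrite mulr0; left.
have [->|x0] := eqVneq x 0; first by rewrite mul0r; left.
have [->|y0] := eqVneq y 0; first by rewrite mulr0; left.
by right; rewrite valuationM // lerD.
Qed.

Lemma vgeX (x : K) n k : vge v x n -> vge v (x ^+ k) (n *+ k).
Proof.
move=> h; elim: k => [|k IH]; first by right; rewrite expr0 valuation1.
by rewrite exprS mulrS; apply: vgeM.
Qed.

Lemma vgeM_le (x y : K) m n k : vge v x m -> vge v y n -> k <= m + n ->
  vge v (x * y) k.
Proof. by move=> hx hy /vgeW; apply; apply: vgeM. Qed.

Lemma vgeX_le (x : K) n k j : vge v x n -> j <= n *+ k -> vge v (x ^+ k) j.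
Proof. by move=> hx /vgeW; apply; apply: vgeX. Qed.

Lemma veqM (x y : K) m n : veq v x m -> veq v y n -> veq v (x * y) (m + n).
Proof. by case=> x0 <- [y0 <-]; split; [rewrite mulf_neq0|rewrite valuationM]. Qed.

Lemma veqX (x : K) n k : veq v x n -> veq v (x ^+ k) (n *+ k).
Proof.
case=> x0 <-; split; first by rewrite expf_neq0.
elim: k => [|k IH]; first by rewrite expr0 valuation1.
by rewrite exprS valuationM ?expf_neq0 // IH mulrS.
Qed.

Lemma veqD_dominant (x y : K) n : veq v x n -> vge v y (n + 1) -> veq v (x + y) n.
Proof.
move=> hx hy; have hxy : vge v (x + y) n by apply: vgeD (veq_vge hx) (vgeW _ hy); lia.
have not_hxy1 : ~ vge v (x + y) (n + 1).
  by move=> /vgeD /(_ (vgeN hy)); rewrite addrK => /(veq_vge_le hx); lia.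
case: hxy => [xy0|le_n]; first by case: not_hxy1; left.
split; first by apply: contra_notN not_hxy1 => /eqP->; left.
by apply/eqP; rewrite eq_le le_n andbT leNgt; apply/negP => lt_n; apply: not_hxy1; right; lia.
Qed.

Lemma veqMX (c x : K) m n k j :
  veq v c m -> veq v x n -> m + n *+ k = j -> veq v (c * x ^+ k) j.
Proof. by move=> hc /(veqX k) hx <-; apply: veqM. Qed.

Lemma veq_dominant (lead rest sum : K) n :
  sum = lead + rest -> veq v lead n -> vge v rest (n + 1) -> veq v sum n.
Proof. by move=> ->; apply: veqD_dominant. Qed.

Lemma neq0_dominant (lead rest sum : K) n :
  sum = lead + rest -> veq v lead n -> vge v rest (n + 1) -> sum != 0.
Proof. by move=> e hl hr; case: (veq_dominant e hl hr). Qed.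

Lemma integral_unit_or_maximal (x : K) : integral v x -> veq v x 0 \/ vge v x 1.
Proof.
case=> [->|h]; first by right; left.
have [->|x0] := eqVneq x 0; first by right; left.
have [e|ne] := eqVneq (v x) 0; first by left.
by right; right; lia.
Qed.

Lemma exists_veq (n : int) : exists c : K, veq v c n.
Proof.
case: hv => _ _ [p [p0 vp]].
have vpX k : veq v (p ^+ k) k%:Z.
  by have [pk0 vpk] := veqX k (conj p0 vp); split=> //; rewrite vpk; lia.
case: n => k; first by exists (p ^+ k).
exists (p ^+ k.+1)^-1; have [pk0 vpk] := vpX k.+1.
by split; rewrite ?invr_eq0 // valuationV // vpk NegzE.
Qed.

Lemma exists_min_valuation (s : seq K) : has (fun x => x != 0) s ->
  exists m, (exists2 x, x \in s & veq v x m) /\ {in s, forall y, vge v y m}.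
Proof.
elim: s => [//|a s IH] /=; have [->|a0] /= := eqVneq a 0.
  case/IH=> m [[x xs hx] hall]; exists m; split; first by exists x; rewrite // inE xs orbT.
  by move=> y; rewrite inE => /predU1P[->|/hall//]; left.
have ha : veq v a (v a) by [].
case: (boolP (has (fun x => x != 0) s)) => [/IH [m [[x xs hx] hall]]|/hasPn s0] _.
  have [le_m|lt_a] := leP m (v a).
    exists m; split; first by exists x; rewrite // inE xs orbT.
    by move=> y; rewrite inE => /predU1P[->|/hall//]; right.
  exists (v a); split; first by exists a; rewrite ?mem_head.
  by move=> y; rewrite inE => /predU1P[->|/hall]; [right|apply: vgeW; apply: ltW].
exists (v a); split; first by exists a; rewrite ?mem_head.
by move=> y; rewrite inE => /predU1P[->|/s0]; [right|rewrite negbK => /eqP->; left].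
Qed.

Lemma normalize_point (s : seq K) : has (fun x => x != 0) s ->
  exists2 c : K, (exists2 x, x \in s & veq v (c * x) 0) &
    {in s, forall y, integral v (c * y)}.
Proof.
case/exists_min_valuation=> m [[x xs hx] hall]; have [c hc] := exists_veq (- m).
exists c; first by exists x => //; have := veqM hc hx; rewrite addNr.
by move=> y /hall hy; have := vgeM (veq_vge hc) hy; rewrite addNr.
Qed.

End ValuationArithmetic.

Ltac vge_atom := first [ eassumption | apply: veq_vge; eassumption ].

(* Proves [vge v e k] by structural recursion on [e], from hypotheses
   bounding the atoms of [e]. *)
Ltac vge_bound :=
  lazymatch goal with
  | |- is_normalised_discrete_valuation _ => assumption
  | |- vge _ ?x ?k =>
    first [ tryif is_evar k then vge_atom else (eapply vgeW; [|vge_atom]; lia)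
          | lazymatch x with
            | _ + _ => apply: vgeD; vge_bound
            | - _ => apply: vgeN; vge_bound
            | _ * _ => tryif is_evar k then (apply: vgeM; vge_bound)
                       else (eapply vgeM_le; [vge_bound | vge_bound | vge_bound | lia])
            | _ ^+ _ => tryif is_evar k then (apply: vgeX; vge_bound)
                        else (eapply vgeX_le; [vge_bound | vge_bound | lia])
            end ]
  end.

Section CriticalModels.
Variables (K : fieldType) (v : K -> int).
Hypothesis hv : is_normalised_discrete_valuation v.

Lemma sqr_addM_neq_odd_valuation (k : int) (Q R y : K) :
  vge v Q (k + 1) -> veq v R (2 * k + 1) -> y ^+ 2 + Q * y != R.
Proof.
move=> hQ hR; apply/eqP => E; have [y0|y0] := eqVneq y 0.
  by case: hR; rewrite -E y0 expr0n mulr0 addr0 eqxx.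
have hy : veq v y (v y) by [].
have [le_yk|lt_ky] := lerP (v y) k.
  have hL : veq v (y ^+ 2 + Q * y) (v y *+ 2).
    apply: (veqD_dominant hv); first exact: (veqX hv 2 hy).
    by eapply (vgeM_le hv); [exact: hQ|exact: veq_vge hy|lia].
  by move: hL hR; rewrite E /veq => -[_ ->] [_]; lia.
have hy1 : vge v y (k + 1) by right; lia.
have hL : vge v (y ^+ 2 + Q * y) (2 * k + 2) by vge_bound.
by have := veq_vge_le hR; rewrite -E => /(_ _ hL); lia.
Qed.

Lemma quartic_no_normalized_point (l m n a b c d e x z y : K) :
  critical_quartic v l m n a b c d e -> integral v x -> integral v z ->
  veq v x 0 \/ veq v z 0 ->
  y ^+ 2 + (l * x ^+ 2 + m * x * z + n * z ^+ 2) * y !=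
    a * x ^+ 4 + b * x ^+ 3 * z + c * x ^+ 2 * z ^+ 2 + d * x * z ^+ 3 + e * z ^+ 4.
Proof.
move=> [[hl hm hn] [ha hb hc hd he]] ix iz hxz.
have [hx|hx] := integral_unit_or_maximal ix.
  apply: (sqr_addM_neq_odd_valuation (k := 0)); first by vge_bound.
  apply: (veq_dominant hv (lead := a * x ^+ 4)
    (rest := b * x ^+ 3 * z + c * x ^+ 2 * z ^+ 2 + d * x * z ^+ 3 + e * z ^+ 4)).
  - by ring.
  - by apply: (veqMX hv ha hx).
  - by vge_bound.
have hz : veq v z 0 by case: hxz => // /veq_vge_le /(_ hx).
clear ix; apply: (sqr_addM_neq_odd_valuation (k := 1)); first by vge_bound.
apply: (veq_dominant hv (lead := e * z ^+ 4)
  (rest := a * x ^+ 4 + b * x ^+ 3 * z + c * x ^+ 2 * z ^+ 2 + d * x * z ^+ 3)).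
- by ring.
- by apply: (veqMX hv he hz).
- by vge_bound.
Qed.

Lemma critical_quartic_insoluble (l m n a b c d e : K) :
  critical_quartic v l m n a b c d e -> ~ quartic_has_point l m n a b c d e.
Proof.
move=> hcrit [x [z [y [nz E]]]].
have nz_xz : has (fun w => w != 0) [:: x; z].
  rewrite /= orbF; apply: contra_neqT nz; rewrite negb_or !negbK => /andP[/eqP x0 /eqP z0].
  move: E; rewrite x0 z0 !expr0n /= !(mulr0, mul0r, addr0) => /eqP.
  by rewrite sqrf_eq0 => /eqP ->.
have [k [t ts ht] hall] := normalize_point hv nz_xz.
have ix : integral v (k * x) by apply: hall; rewrite mem_head.
have iz : integral v (k * z) by apply: hall; rewrite !inE eqxx orbT.
have hunit : veq v (k * x) 0 \/ veq v (k * z) 0.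
  by move: ts ht; rewrite !inE => /orP[] /eqP ->; [left|right].
move/eqP: (quartic_no_normalized_point (k ^+ 2 * y) hcrit ix iz hunit); apply.
by move/(canRL (addrK _)): E => E; ring: E.
Qed.

Lemma cubic_no_normalized_point (c300 c210 c120 c030 c201 c111 c021 c102 c012 c003 x y z : K) :
  critical_cubic v c300 c210 c120 c030 c201 c111 c021 c102 c012 c003 ->
  integral v x -> integral v y -> integral v z ->
  [\/ veq v x 0, veq v y 0 | veq v z 0] ->
  cubic_eval c300 c210 c120 c030 c201 c111 c021 c102 c012 c003 x y z != 0.
Proof.
move=> [[h300 h210 h120 h030] [[h201 h111 h021] [h102 h012 h003]]] ix iy iz hxyz.
rewrite /cubic_eval; have [hx|hx] := integral_unit_or_maximal ix.
  apply: (neq0_dominant hv (lead := c300 * x ^+ 3) (rest := c210 * x ^+ 2 * y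
    + c120 * x * y ^+ 2 + c030 * y ^+ 3 + c201 * x ^+ 2 * z + c111 * x * y * z
    + c021 * y ^+ 2 * z + c102 * x * z ^+ 2 + c012 * y * z ^+ 2 + c003 * z ^+ 3)).
  - by ring.
  - by apply: (veqMX hv h300 hx).
  - by vge_bound.
clear ix; have [hy|hy] := integral_unit_or_maximal iy.
  apply: (neq0_dominant hv (lead := c030 * y ^+ 3) (rest := c300 * x ^+ 3
    + c210 * x ^+ 2 * y + c120 * x * y ^+ 2 + c201 * x ^+ 2 * z + c111 * x * y * z
    + c021 * y ^+ 2 * z + c102 * x * z ^+ 2 + c012 * y * z ^+ 2 + c003 * z ^+ 3)).
  - by ring.
  - by apply: (veqMX hv h030 hy).
  - by vge_bound.
have hz : veq v z 0 by case: hxyz => // /veq_vge_le; [move/(_ _ hx)|move/(_ _ hy)].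
clear iy; apply: (neq0_dominant hv (lead := c003 * z ^+ 3) (rest := c300 * x ^+ 3
  + c210 * x ^+ 2 * y + c120 * x * y ^+ 2 + c030 * y ^+ 3 + c201 * x ^+ 2 * z
  + c111 * x * y * z + c021 * y ^+ 2 * z + c102 * x * z ^+ 2 + c012 * y * z ^+ 2)).
- by ring.
- by apply: (veqMX hv h003 hz).
- by vge_bound.
Qed.

Lemma cubic_evalZ (c300 c210 c120 c030 c201 c111 c021 c102 c012 c003 k x y z : K) :
  cubic_eval c300 c210 c120 c030 c201 c111 c021 c102 c012 c003 (k * x) (k * y) (k * z)
  = k ^+ 3 * cubic_eval c300 c210 c120 c030 c201 c111 c021 c102 c012 c003 x y z.
Proof. by rewrite /cubic_eval; ring. Qed.

Lemma critical_cubic_insoluble (c300 c210 c120 c030 c201 c111 c021 c102 c012 c003 : K) :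
  critical_cubic v c300 c210 c120 c030 c201 c111 c021 c102 c012 c003 ->
  ~ cubic_has_point c300 c210 c120 c030 c201 c111 c021 c102 c012 c003.
Proof.
move=> hcrit [x [y [z [nz E]]]].
have nz_xyz : has (fun w => w != 0) [:: x; y; z].
  rewrite /= orbF; apply: contra_neqT nz.
  by rewrite !negb_or !negbK => /and3P[/eqP-> /eqP-> /eqP->].
have [k [t ts ht] hall] := normalize_point hv nz_xyz.
have [ix iy iz] : [/\ integral v (k * x), integral v (k * y) & integral v (k * z)].
  by split; apply: hall; rewrite !inE eqxx ?orbT.
have hunit : [\/ veq v (k * x) 0, veq v (k * y) 0 | veq v (k * z) 0].
  by move: ts ht; rewrite !inE => /or3P[] /eqP ->; [apply: Or31|apply: Or32|apply: Or33].
by move/eqP: (cubic_no_normalized_point hcrit ix iy iz hunit); rewrite cubic_evalZ E mulr0.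
Qed.

End CriticalModels.

Section ResidueField.
Local Open Scope quotient_scope.
Variables (K : fieldType) (v : K -> int).
Hypothesis hv : is_normalised_discrete_valuation v.

Definition valuation_ring : {pred K} := fun x => `[< integral v x >].

Lemma valuation_ring_subring_closed : subring_closed valuation_ring.
Proof.
split; first by apply/asboolP; right; rewrite (valuation1 hv).
- by move=> x y /asboolP hx /asboolP hy; exact/asboolP/(vgeD hv hx (vgeN hv hy)).
- by move=> x y /asboolP hx /asboolP hy; apply/asboolP; have := vgeM hv hx hy.
Qed.

HB.instance Definition _ :=
  GRing.isSubringClosed.Build K valuation_ring valuation_ring_subring_closed.

Record vring := VRing { vring_val : K; vring_valP : vring_val \in valuation_ring }.
HB.instance Definition _ := [isSub for vring_val].
HB.instance Definition _ := [Choice of vring by <:].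
HB.instance Definition _ := [SubChoice_isSubComNzRing of vring by <:].

Lemma vring_integral (a : vring) : integral v (val a).
Proof. exact/asboolP/vring_valP. Qed.

Definition maximal_ideal : {pred vring} := fun a => `[< vge v (val a) 1 >].

Lemma maximal_ideal_closed : idealr_closed maximal_ideal.
Proof.
split; first by apply/asboolP; left.
- apply/negP => /asboolP /(veq_vge_le (conj (oner_neq0 K) (valuation1 hv))).
  by [].
- move=> a b c /asboolP hb /asboolP hc; apply/asboolP; apply: (vgeD hv) hc.
  by have := vgeM hv (vring_integral a) hb; rewrite add0r.
Qed.

HB.instance Definition _ := isIdealr.Build vring maximal_ideal maximal_ideal_closed.

Definition residue_ring := {ideal_quot maximal_ideal}.

Lemma residue_ring_eq0 (a : vring) : (\pi_residue_ring a == 0) = (a \in maximal_ideal).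
Proof. by rewrite -(rmorph0 \pi_residue_ring) -Quotient.idealrBE subr0. Qed.

(* The valuation ring inverts exactly its units; other elements get the junk
   value [0]. *)
Definition vring_inv (a : vring) : vring := insubd 0 (val a)^-1.

Definition residue_inv (z : residue_ring) : residue_ring :=
  \pi_residue_ring (vring_inv (repr z)).

Lemma residue_mulVf (z : residue_ring) : z != 0 -> residue_inv z * z = 1.
Proof.
set a := repr z; have ez : z = \pi_residue_ring a by rewrite reprK.
rewrite {1}ez residue_ring_eq0 => /asboolP not_max.
have [ha|/not_max //] := integral_unit_or_maximal (vring_integral a).
have a0 : val a != 0 by case: ha.
have ia : (val a)^-1 \in valuation_ring.
  by apply/asboolP; right; rewrite (valuationV hv a0) (proj2 ha) oppr0.
rewrite /residue_inv -/a ez -rmorphM -(rmorph1 \pi_residue_ring); congr \pi.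
by apply: val_inj; rewrite /= /vring_inv insubdK // mulVf.
Qed.

Lemma residue_inv0 : residue_inv 0 = 0.
Proof.
rewrite /residue_inv; set a := repr _.
have /asboolP ma : a \in maximal_ideal by rewrite -residue_ring_eq0 reprK.
suff -> : vring_inv a = 0 by rewrite rmorph0.
apply: val_inj; rewrite /vring_inv /insubd; case: insubP => [b /asboolP ib /= ->|] //=.
have [->|a0] := eqVneq (val a) 0; first by rewrite invr0.
case: ma => [/eqP|ma]; first by rewrite (negPf a0).
case: ib => [/eqP|]; first by rewrite invr_eq0 (negPf a0).
by rewrite (valuationV hv a0); lia.
Qed.

Definition residue_field : Type := residue_ring.
HB.instance Definition _ := GRing.ComNzRing.on residue_field.
HB.instance Definition _ :=
  GRing.ComNzRing_isField.Build residue_field residue_mulVf residue_inv0.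

Definition reduce (x : K) : residue_field := \pi_residue_ring (insubd 0 x).

Lemma reduce_vring (x : K) (ix : integral v x) :
  reduce x = \pi_residue_ring (Sub x (asboolT ix)).
Proof.
by rewrite /reduce; congr \pi; apply: val_inj; rewrite /= insubdK //; apply: asboolT.
Qed.

Lemma reduceD x y : integral v x -> integral v y -> reduce (x + y) = reduce x + reduce y.
Proof.
move=> ix iy; rewrite (reduce_vring (vgeD hv ix iy)) (reduce_vring ix) (reduce_vring iy).
by rewrite -rmorphD; congr \pi; apply: val_inj.
Qed.

Lemma reduceM x y : integral v x -> integral v y -> reduce (x * y) = reduce x * reduce y.
Proof.
move=> ix iy; have ixy : integral v (x * y) by have := vgeM hv ix iy.
rewrite (reduce_vring ixy) (reduce_vring ix) (reduce_vring iy).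
by rewrite -rmorphM; congr \pi; apply: val_inj.
Qed.

Lemma reduce1 : reduce 1 = 1.
Proof.
have i1 : integral v 1 by right; rewrite (valuation1 hv).
by rewrite (reduce_vring i1) -(rmorph1 \pi_residue_ring); congr \pi; apply: val_inj.
Qed.

Lemma reduce_eq0 x : integral v x -> (reduce x = 0 <-> vge v x 1).
Proof.
move=> ix; rewrite (reduce_vring ix); split=> [/eqP|hx]; last first.
  by apply/eqP; rewrite residue_ring_eq0; apply/asboolP.
by rewrite residue_ring_eq0 => /asboolP.
Qed.

Lemma exists_closed_residue_map :
  exists (L : closedFieldType) (r : K -> L), residue_map v r.
Proof.
have [L [f [fD fM f1]]] := exists_closed_field_embedding residue_field.
have f_eq0 a : f a = 0 <-> a = 0.
  split=> [fa0|->]; last by apply: (@addrI _ (f 0)); rewrite -fD !addr0.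
  apply/eqP; apply: contraTT (oner_neq0 L) => a0.
  by rewrite negbK -f1 -(mulVf a0) fM fa0 mulr0.
exists L, (f \o reduce); split=> [x y ix iy|x y ix iy||x ix] /=.
- by rewrite reduceD // fD.
- by rewrite reduceM // fM.
- by rewrite reduce1 f1.
- by rewrite f_eq0; apply: reduce_eq0.
Qed.
End ResidueField.

Lemma qformE (K : fieldType) (c : 'I_4 -> 'I_4 -> K) x : qform c x =
  c i0 i0 * x i0 * x i0 + c i0 i1 * x i0 * x i1 + c i0 i2 * x i0 * x i2
  + c i0 i3 * x i0 * x i3 + c i1 i1 * x i1 * x i1 + c i1 i2 * x i1 * x i2
  + c i1 i3 * x i1 * x i3 + c i2 i2 * x i2 * x i2 + c i2 i3 * x i2 * x i3
  + c i3 i3 * x i3 * x i3.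
Proof.
rewrite /qform; do 4!rewrite big_mkcond /= !big_ord_recl big_ord0 /=.
rewrite big_ord0.
have -> : lift ord0 (lift ord0 (lift ord0 ord0)) = i3 by apply: val_inj.
have -> : lift ord0 (lift ord0 ord0) = i2 by apply: val_inj.
have -> : lift ord0 ord0 = i1 by apply: val_inj.
have -> : ord0 = i0 by apply: val_inj.
by ring.
Qed.

Lemma ord4P (k : 'I_4) : [\/ k = i0, k = i1, k = i2 | k = i3].
Proof.
by case: k => [[|[|[|[|//]]]] lt_k4]; [apply: Or41|apply: Or42|apply: Or43|apply: Or44];
  apply: val_inj.
Qed.

Lemma qformZ (K : fieldType) (c : 'I_4 -> 'I_4 -> K) (k : K) (x : 'I_4 -> K) :
  qform c (fun i => k * x i) = k ^+ 2 * qform c x.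
Proof. by rewrite !qformE; ring. Qed.

Definition descend (K : fieldType) (pi : K) (x : 'I_4 -> K) (i : 'I_4) : K :=
  if (i < 2)%N then x i / pi else x i.

Lemma qform_Rcoef (K : fieldType) (pi : K) (c : 'I_4 -> 'I_4 -> K) (x : 'I_4 -> K) :
  pi != 0 -> qform (Rcoef pi c) (descend pi x) = qform c x / pi.
Proof. by move=> pi0; rewrite !qformE /Rcoef /descend /=; field. Qed.

Section ResidueMap.
Variables (K : fieldType) (v : K -> int) (L : fieldType) (r : K -> L).
Hypotheses (hv : is_normalised_discrete_valuation v) (hr : residue_map v r).

Lemma residueD (a b : K) : integral v a -> integral v b -> r (a + b) = r a + r b.
Proof. by case: hr => h _ _ _; apply: h. Qed.

Lemma residueM (a b : K) : integral v a -> integral v b -> r (a * b) = r a * r b.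
Proof. by case: hr => _ h _ _; apply: h. Qed.

Lemma residue_eq0 (a : K) : integral v a -> (r a = 0 <-> vge v a 1).
Proof. by case: hr => _ _ _; apply. Qed.

Lemma residue0 : r 0 = 0.
Proof. by apply/residue_eq0; left. Qed.

Lemma residue_unit_neq0 (a : K) : veq v a 0 -> r a != 0.
Proof.
move=> ha; apply/eqP => /(residue_eq0 (veq_vge ha)) /(veq_vge_le ha).
by [].
Qed.

Lemma residue_sum (I : Type) (s : seq I) (P : pred I) (F : I -> K) :
  (forall i, P i -> integral v (F i)) ->
  integral v (\sum_(i <- s | P i) F i) /\
  r (\sum_(i <- s | P i) F i) = \sum_(i <- s | P i) r (F i).
Proof.
move=> hF; apply: (big_ind2 (fun a b => integral v a /\ r a = b)).
- by split; [left|exact: residue0].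
- by move=> a b a' b' [ia <-] [ib <-]; split; [apply: vgeD|apply: residueD].
- by move=> i /hF.
Qed.

Lemma residue_qform (c : 'I_4 -> 'I_4 -> K) (x : 'I_4 -> K) :
  (forall i j : 'I_4, (i <= j)%N -> integral v (c i j)) ->
  (forall i, integral v (x i)) ->
  r (qform c x) = qform (fun i j => r (c i j)) (fun i => r (x i)).
Proof.
move=> hc hx; have hterm (i j : 'I_4) : (i <= j)%N -> integral v (c i j * x i * x j).
  by move=> /hc hij; have := hx i; have := hx j; rewrite /integral => ? ?; vge_bound.
rewrite /qform (residue_sum _ (fun i _ => (residue_sum _ (hterm i)).1)).2.
apply: eq_bigr => i _; rewrite (residue_sum _ (hterm i)).2.
apply: eq_bigr => j /hc hij; have hcx : integral v (c i j * x i).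
  by move: hij (hx i); rewrite /integral => ? ?; vge_bound.
by rewrite (residueM hcx (hx j)) (residueM hij (hx i)).
Qed.
End ResidueMap.

Lemma integral_descend (K : fieldType) (v : K -> int) (pi : K) (x : 'I_4 -> K) :
  is_normalised_discrete_valuation v -> veq v pi 1 ->
  (forall i, integral v (x i)) -> vge v (x i0) 1 -> vge v (x i1) 1 ->
  forall i, integral v (descend pi x i).
Proof.
move=> hv [pi0 vpi] hx m0 m1 i; rewrite /descend; case: ifP => [lt_i2|_]; last exact: hx.
have vpiV : vge v pi^-1 (-1) by right; rewrite (valuationV hv pi0) vpi.
have mi : vge v (x i) 1 by move: lt_i2; case: (ord4P i) => ->.
by rewrite /integral; vge_bound.
Qed.

Section CriticalPair.
Variables (K : fieldType) (v : K -> int) (L : closedFieldType) (r : K -> L).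
Hypotheses (hv : is_normalised_discrete_valuation v) (hr : residue_map v r).

Lemma residue_qform_x12 (c : 'I_4 -> 'I_4 -> K) (x : 'I_4 -> K) :
  reduces_in_x12 v c -> (forall i, integral v (x i)) -> qform c x = 0 ->
  r (c i0 i0) * r (x i0) ^+ 2 + r (c i0 i1) * r (x i0) * r (x i1)
  + r (c i1 i1) * r (x i1) ^+ 2 = 0.
Proof.
move=> hc hx E; have hc' (i j : 'I_4) : (i <= j)%N -> integral v (c i j) by move/hc=> [].
have r0 (i j : 'I_4) : (i <= j)%N -> (2 <= j)%N -> r (c i j) = 0.
  by move=> ij j2; have [ic /(_ j2) m] := hc i j ij; exact/(residue_eq0 hr ic).
rewrite -(residue0 hr) -E (residue_qform hv hr hc' hx) qformE.
rewrite (r0 i0 i2) // (r0 i0 i3) // (r0 i1 i2) // (r0 i1 i3) //.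
by rewrite (r0 i2 i2) // (r0 i2 i3) // (r0 i3 i3) //; ring.
Qed.

Lemma residue_qform_x34 (c : 'I_4 -> 'I_4 -> K) (x : 'I_4 -> K) :
  reduces_in_x34 v c -> (forall i, integral v (x i)) -> qform c x = 0 ->
  r (c i2 i2) * r (x i2) ^+ 2 + r (c i2 i3) * r (x i2) * r (x i3)
  + r (c i3 i3) * r (x i3) ^+ 2 = 0.
Proof.
move=> hc hx E; have hc' (i j : 'I_4) : (i <= j)%N -> integral v (c i j) by move/hc=> [].
have r0 (i j : 'I_4) : (i <= j)%N -> (i < 2)%N -> r (c i j) = 0.
  by move=> ij i2; have [ic /(_ i2) m] := hc i j ij; exact/(residue_eq0 hr ic).
rewrite -(residue0 hr) -E (residue_qform hv hr hc' hx) qformE.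
rewrite (r0 i0 i0) // (r0 i0 i1) // (r0 i0 i2) // (r0 i0 i3) //.
by rewrite (r0 i1 i1) // (r0 i1 i2) // (r0 i1 i3) //; ring.
Qed.

Lemma critical_pair_insoluble (pi : K) (c1 c2 : 'I_4 -> 'I_4 -> K) :
  veq v pi 1 -> critical_pair v pi c1 c2 -> ~ pair_has_point c1 c2.
Proof.
move=> hpi [[h1 h2 nc12] [h1' h2' nc34]] [x [[j xj] [E1 E2]]].
have nz_x : has (fun y => y != 0) [:: x i0; x i1; x i2; x i3].
  by apply/hasP; exists (x j) => //; case: (ord4P j) => ->; rewrite !inE eqxx ?orbT.
have [k [t ts ht] hall] := normalize_point hv nz_x.
pose x' (i : 'I_4) := k * x i.
have ix' (i : 'I_4) : integral v (x' i).
  by apply: hall; case: (ord4P i) => ->; rewrite !inE eqxx ?orbT.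
have [E1' E2'] : qform c1 x' = 0 /\ qform c2 x' = 0 by rewrite !qformZ E1 E2 mulr0.
have [nz01|] := boolP ((r (x' i0) != 0) || (r (x' i1) != 0)).
  apply: (nc12 L r hr (r (x' i0)) (r (x' i1))); first by rewrite xpair_eqE negb_and.
  by split; [apply: (residue_qform_x12 h1 ix' E1')|apply: (residue_qform_x12 h2 ix' E2')].
rewrite negb_or !negbK => /andP[/eqP /(residue_eq0 hr (ix' i0)) m0].
move/eqP/(residue_eq0 hr (ix' i1)) => m1.
have hunit : veq v (x' i2) 0 \/ veq v (x' i3) 0.
  move: ts ht; rewrite !inE => /or4P[] /eqP -> ht.
  - by have := veq_vge_le ht m0.
  - by have := veq_vge_le ht m1.
  - by left.
  - by right.
have iy := integral_descend hv hpi ix' m0 m1.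
have pi0 : pi != 0 by case: hpi.
have F1 : qform (Rcoef pi c1) (descend pi x') = 0 by rewrite qform_Rcoef // E1' mul0r.
have F2 : qform (Rcoef pi c2) (descend pi x') = 0 by rewrite qform_Rcoef // E2' mul0r.
apply: (nc34 L r hr (r (x' i2)) (r (x' i3))).
  by rewrite xpair_eqE negb_and; case: hunit => /(residue_unit_neq0 hr) ->; rewrite ?orbT.
by split; [apply: (residue_qform_x34 h1' iy F1)|apply: (residue_qform_x34 h2' iy F2)].
Qed.
End CriticalPair.

Unset Implicit Arguments.

(* Insolubility does not need the residue field to be perfect. *)
Theorem lemma5p2 (K : fieldType) (v : K -> int)
  (hv : is_normalised_discrete_valuation v)
  (pi : K) (hpi : veq v pi 1)
  (hperf : perfect_residue_field v) :
  [/\ (forall l m n a b c d e : K,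
         critical_quartic v l m n a b c d e -> ~ quartic_has_point l m n a b c d e),
      (forall c300 c210 c120 c030 c201 c111 c021 c102 c012 c003 : K,
         critical_cubic v c300 c210 c120 c030 c201 c111 c021 c102 c012 c003 ->
         ~ cubic_has_point c300 c210 c120 c030 c201 c111 c021 c102 c012 c003)
    & (forall c1 c2 : 'I_4 -> 'I_4 -> K,
         critical_pair v pi c1 c2 -> ~ pair_has_point c1 c2)].
Proof.
have [L [r hr]] := exists_closed_residue_map hv.
split=> [l m n a b c d e|c300 c210 c120 c030 c201 c111 c021 c102 c012 c003|c1 c2].
- exact: critical_quartic_insoluble.
- exact: critical_cubic_insoluble.
- exact: (critical_pair_insoluble hv hr hpi).
Qed.
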